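(* Let $G$ be a graph with at least one vertex and $f:V(G)\to\{1,2,3,\dots\}$. Then $\gamma_{gr}^{\times2}(G_f)\le2\gamma_{gr}(G)$. Moreover, there exists a GDDS $S=(v_1,\dots,v_{2k})$ of $G_f$ such that for each odd $i\in\{1,3,\dots,2k-1\}$, $v_i$ and $v_{i+1}$ are true twin vertices in $G_f$.
   Context: Graphs are finite, simple, undirected; $N[v]$ closed neighborhood; $x,y$ are true twins if $N[x]=N[y]$. $G_f$ is the graph with vertex set $\bigcup_{v\in V(G)}\{v^1,\dots,v^{f(v)+1}\}$ in which $v^iu^j$ is an edge iff either $v=u$ and $i\neq j$, or $vu\in E(G)$. A sequence $(v_1,\dots,v_k)$ of distinct vertices is legal if $N[v_i]\setminus\bigcup_{j<i}N[v_j]\neq\emptyset$ for $i\ge2$, and a dominating sequence if moreover its vertex set is dominating; $\gamma_{gr}(G)$ is the maximum length of a dominating sequence. A sequence of distinct vertices is a double neighborhood sequence if for each $i$ some $w\in N[v_i]$ satisfies $|\{j<i:w\in N[v_j]\}|\le1$, and a double dominating sequence (DDS) if moreover every vertex $w$ satisfies $|N[w]\cap\{v_1,\dots,v_k\}|\ge2$; a GDDS is a DDS of maximum length, this length being $\gamma_{gr}^{\times2}$. *)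

From mathcomp Require Import all_boot.
Set Implicit Arguments. Unset Strict Implicit. Unset Printing Implicit Defensive.

(* A simple graph is a symmetric irreflexive relation e on a finType T. *)

Section Defs.
Variables (T : finType) (e : rel T).

Definition cnbhd (v : T) : {set T} := [set u | (u == v) || e v u].

Definition true_twins (x y : T) : bool := cnbhd x == cnbhd y.

(* legality: each new vertex footprints a vertex not in the union D of the
   previous closed neighbourhoods *)
Fixpoint legal_from (D : {set T}) (s : seq T) : bool :=
  match s with
  | [::] => true
  | x :: s' => (cnbhd x :\: D != set0) && legal_from (D :|: cnbhd x) s'
  end.

Definition legal_seq (s : seq T) : bool :=
  uniq s && match s with [::] => true | x :: s' => legal_from (cnbhd x) s' end.

Definition dominating (A : {set T}) : bool :=
  [forall w, [exists v in A, w \in cnbhd v]].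

Definition dom_seq (s : seq T) : bool :=
  legal_seq s && dominating [set x | x \in s].

Definition grundy_dom : nat :=
  \max_(n < #|T|.+1 | [exists t : n.-tuple T, dom_seq t]) n.

(* double neighbourhood sequence: p is the prefix already chosen *)
Fixpoint dns_from (p : seq T) (s : seq T) : bool :=
  match s with
  | [::] => true
  | x :: s' =>
      [exists w in cnbhd x, count (fun y => w \in cnbhd y) p <= 1]
      && dns_from (rcons p x) s'
  end.

Definition double_nbhd_seq (s : seq T) : bool := uniq s && dns_from [::] s.

Definition double_dom_seq (s : seq T) : bool :=
  double_nbhd_seq s && [forall w, 2 <= #|cnbhd w :&: [set x | x \in s]|].

Definition grundy_double_dom : nat :=
  \max_(n < #|T|.+1 | [exists t : n.-tuple T, double_dom_seq t]) n.

Definition is_GDDS (s : seq T) : Prop :=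
  double_dom_seq s /\ size s = grundy_double_dom.

End Defs.

(* The graph G_f: vertex v^i for v in V(G), i in {0,..,f v} (f v + 1 copies),
   v^i u^j adjacent iff (v = u and i <> j) or vu in E(G). *)
Definition Gf_vert (T : finType) (f : T -> nat) : finType :=
  {v : T & 'I_(f v).+1}.

Definition Gf_edge (T : finType) (e : rel T) (f : T -> nat) : rel (Gf_vert f) :=
  fun a b => ((tag a == tag b) && (val (tagged a) != val (tagged b)))
             || e (tag a) (tag b).
Arguments Gf_vert : clear implicits.
Arguments Gf_edge {T} e f.

From mathcomp Require Import all_boot zify.
Set Implicit Arguments. Unset Strict Implicit. Unset Printing Implicit Defensive.

(* Copies of one vertex of G are true twins in G_f, and N[x] in G_f is the
   preimage of N[tag x] in G.  Upper bound: along a double neighbourhood sequence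
   of G_f keep two legal sequences A, B of G whose concatenation is a permutation
   of the projected prefix.  A new vertex x has a witness w seen at most once
   before, so tag w lies in the closed neighbourhood of at most one of A, B, and
   appending tag x to the other one keeps it legal.  Every legal sequence extends
   to a dominating one, so both have length at most gamma_gr(G).  Lower bound:
   doubling a Grundy dominating sequence (v_1, ..., v_k) of G into
   (v_1^1, v_1^2, ..., v_k^1, v_k^2) gives a double dominating sequence: if w is
   footprinted by v_i, the copy w^1 is dominated zero times before v_i^1 and
   once before v_i^2. *)

Section MaxSize.
Variables (T : finType) (P : pred (seq T)).

(* [grundy_dom e] and [grundy_double_dom e] are convertible to
   [max_size (dom_seq e)] and [max_size (double_dom_seq e)]. *)
Definition max_size : nat := \max_(n < #|T|.+1 | [exists t : n.-tuple T, P t]) n.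

Lemma max_size_ge s : uniq s -> P s -> size s <= max_size.
Proof.
move=> s_uniq Ps; have s_small : size s < #|T|.+1.
  by rewrite ltnS -(card_uniqP s_uniq) max_card.
apply: (leq_bigmax_cond (Ordinal s_small)).
by apply/existsP; exists (in_tuple s).
Qed.

Lemma max_size_leP m : (forall s, P s -> size s <= m) -> max_size <= m.
Proof.
move=> le_m; apply/bigmax_leqP => n /existsP[t Pt].
by rewrite -(size_tuple t) le_m.
Qed.

Lemma max_size_attained s0 : uniq s0 -> P s0 -> exists s, P s /\ size s = max_size.
Proof.
move=> s0_uniq Ps0; have s0_small : size s0 < #|T|.+1.
  by rewrite ltnS -(card_uniqP s0_uniq) max_card.
have witness : [exists t : (Ordinal s0_small).-tuple T, P t].
  by apply/existsP; exists (in_tuple s0).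
rewrite /max_size (bigmax_eq_arg (Ordinal s0_small)) //.
case: arg_maxnP => // n /existsP[t Pt] _.
by exists t; rewrite size_tuple.
Qed.

End MaxSize.

Section LegalSequences.
Variables (T : finType) (e : rel T).

Lemma cnbhd_refl x : x \in cnbhd e x.
Proof. by rewrite inE eqxx. Qed.

Definition cnbhd_seq (A : seq T) : {set T} := [set v | has (fun a => v \in cnbhd e a) A].

Lemma cnbhd_seq0 : cnbhd_seq [::] = set0.
Proof. by apply/setP => v; rewrite !inE. Qed.

Lemma cnbhd_seq_rcons A x : cnbhd_seq (rcons A x) = cnbhd_seq A :|: cnbhd e x.
Proof. by apply/setP => v; rewrite in_setU !in_set has_rcons inE orbC. Qed.

Lemma legal_from_rcons D A x : legal_from e D (rcons A x) =
  legal_from e D A && (cnbhd e x :\: (D :|: cnbhd_seq A) != set0).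
Proof.
elim: A D => [|y A IH] D /=; first by rewrite cnbhd_seq0 setU0 andbT.
rewrite IH andbA; congr (_ && (cnbhd e x :\: _ != set0)).
by apply/setP => v; rewrite !inE /= !inE !orbA.
Qed.

Lemma legal_from_not_subset D s y : legal_from e D s -> y \in s -> ~~ (cnbhd e y \subset D).
Proof.
elim: s D => [|x s IH] D //= /andP[new_x legal_s]; rewrite inE => /predU1P[->|ys].
  by rewrite -setD_eq0.
apply: contra (IH _ legal_s ys) => /subset_trans; apply; exact: subsetUl.
Qed.

Lemma legal_from_uniq D s : legal_from e D s -> uniq s.
Proof.
elim: s D => [|x s IH] D //= /andP[_ legal_s]; rewrite (IH _ legal_s) andbT.
by apply/negP => xs; have := legal_from_not_subset legal_s xs; rewrite subsetUr.
Qed.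

Lemma legal_seqE s : legal_seq e s = legal_from e set0 s.
Proof.
have legal_cons x s' : legal_from e set0 (x :: s') = legal_from e (cnbhd e x) s'.
  by rewrite /= set0U setD0 andb_idl // => _; apply/set0Pn; exists x; exact: cnbhd_refl.
rewrite /legal_seq; case: s => // x s; rewrite -legal_cons.
exact/andb_idl/legal_from_uniq.
Qed.

Lemma legal_rcons_private A w x : legal_from e set0 A ->
  w \notin cnbhd_seq A -> w \in cnbhd e x -> legal_from e set0 (rcons A x).
Proof.
move=> legal_A w_new w_x; rewrite legal_from_rcons legal_A set0U.
by apply/set0Pn; exists w; rewrite inE w_new.
Qed.

Lemma dominating_seqP A :
  reflect (forall w, w \in cnbhd_seq A) (dominating e [set x | x \in A]).
Proof.
apply: (iffP forallP) => dom w; have := dom w; rewrite inE.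
  by case/existsP => a; rewrite inE => /andP[aA wa]; apply/hasP; exists a.
by case/hasP => a aA wa; apply/existsP; exists a; rewrite inE aA.
Qed.

Lemma dom_seq_uniq s : dom_seq e s -> uniq s.
Proof. by case/andP; rewrite legal_seqE => /legal_from_uniq. Qed.

Lemma legal_from_extend A : legal_from e set0 A -> exists s, dom_seq e (A ++ s).
Proof.
move: {2}_.+1 (ltnSn #|~: cnbhd_seq A|) => n; elim: n A => // n IH A small legal_A.
case: (pickP [pred w | w \notin cnbhd_seq A]) => [w /= w_new | dom]; last first.
  exists [::]; rewrite cats0 /dom_seq legal_seqE legal_A.
  by apply/dominating_seqP => w; apply/negbFE/dom.
have legal_Aw := legal_rcons_private legal_A w_new (cnbhd_refl w).
have shrink : #|~: cnbhd_seq (rcons A w)| < #|~: cnbhd_seq A|.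
  apply/proper_card/properP; rewrite cnbhd_seq_rcons setCU subsetIl.
  by split=> //; exists w; rewrite ?in_setI !in_setC ?w_new ?cnbhd_refl ?andbF.
have [s dom_s] := IH _ (leq_trans shrink small) legal_Aw.
by exists (w :: s); rewrite -cat_rcons.
Qed.

Lemma legal_size_le_grundy_dom A : legal_from e set0 A -> size A <= grundy_dom e.
Proof.
move=> /legal_from_extend[s dom_As]; apply: leq_trans (max_size_ge (dom_seq_uniq dom_As) dom_As).
by rewrite size_cat leq_addr.
Qed.

Lemma grundy_dom_attained : exists s, dom_seq e s /\ size s = grundy_dom e.
Proof.
have [s dom_s] := @legal_from_extend [::] isT.
exact: max_size_attained (dom_seq_uniq dom_s) dom_s.
Qed.

End LegalSequences.

Section BlowUp.
Variables (T : finType) (e : rel T) (f : T -> nat).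
Local Notation V := (Gf_vert T f).
Local Notation E := (Gf_edge e f).

Lemma cnbhd_Gf (x y : V) : (x \in cnbhd E y) = (tag x \in cnbhd e (tag y)).
Proof.
case: x y => [a i] [b j]; rewrite !inE /Gf_edge /=.
case: (eqVneq a b) => [ab|a_b]; first subst b.
  by case: (eqVneq j i) => [->|ij]; rewrite ?eqxx ?orbT // andTb (inj_eq val_inj) ij !orbT.
suff -> : (existT _ a i == existT _ b j :> V) = false by [].
by apply/eqP => -[ab]; rewrite ab eqxx in a_b.
Qed.

Lemma true_twins_tag (x y : V) : tag x = tag y -> true_twins E x y.
Proof. by move=> xy; apply/eqP/setP => z; rewrite !cnbhd_Gf xy. Qed.

Lemma dns_from_split p s A B : dns_from E p s ->
  perm_eq (map tag p) (A ++ B) -> legal_from e set0 A -> legal_from e set0 B ->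
  exists A' B', [/\ perm_eq (map tag (p ++ s)) (A' ++ B'),
                    legal_from e set0 A' & legal_from e set0 B'].
Proof.
elim: s p A B => [|x s IH] p A B /=; first by rewrite cats0 => _ ? ? ?; exists A, B.
case/andP=> /existsP[w /andP[w_x w_once]] dns_s perm_p legal_A legal_B.
have step A1 B1 : (forall a, count a (A1 ++ B1) = count a (A ++ B) + a (tag x)) ->
    legal_from e set0 A1 -> legal_from e set0 B1 ->
    exists A' B', [/\ perm_eq (map tag (p ++ x :: s)) (A' ++ B'),
                      legal_from e set0 A' & legal_from e set0 B'].
  move=> cnt; rewrite -cat_rcons; apply: IH => //; apply/permP => a.
  by rewrite cnt map_rcons -cats1 !count_cat (permP perm_p) count_cat /= addn0.
rewrite cnbhd_Gf in w_x.
have w_once_AB : count (fun a => tag w \in cnbhd e a) (A ++ B) <= 1.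
  by rewrite -(permP perm_p) count_map -(eq_count (cnbhd_Gf w)).
have [A_priv | B_priv] : tag w \notin cnbhd_seq e A \/ tag w \notin cnbhd_seq e B.
  by move: w_once_AB; rewrite !inE !has_count count_cat; lia.
- apply: step (legal_rcons_private legal_A A_priv w_x) legal_B => a.
  by rewrite -cats1 !count_cat /=; lia.
- apply: step legal_A (legal_rcons_private legal_B B_priv w_x) => a.
  by rewrite -cats1 !count_cat /=; lia.
Qed.

Lemma dns_size_le_twice_grundy_dom s : dns_from E [::] s -> size s <= 2 * grundy_dom e.
Proof.
move=> dns_s; have [A [B [perm_s legal_A legal_B]]] := dns_from_split dns_s (perm_refl _) isT isT.
rewrite -(size_map tag) (perm_size perm_s) size_cat mul2n -addnn.
by rewrite leq_add ?legal_size_le_grundy_dom.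
Qed.

Lemma grundy_double_dom_Gf_le : grundy_double_dom E <= 2 * grundy_dom e.
Proof.
apply: max_size_leP => s /andP[/andP[_ dns_s] _].
exact: dns_size_le_twice_grundy_dom.
Qed.

Hypothesis e_sym : symmetric e.
Hypothesis f_pos : forall v, 0 < f v.

Definition copy0 (u : T) : V := existT _ u ord0.
Definition copy1 (u : T) : V := existT _ u (Ordinal (f_pos u : 1 < (f u).+1)).

Fixpoint double_seq (us : seq T) : seq V :=
  if us is u :: us' then copy0 u :: copy1 u :: double_seq us' else [::].

Lemma size_double_seq us : size (double_seq us) = 2 * size us.
Proof. by elim: us => //= u us ->; rewrite mulnS. Qed.

Lemma copy0_neq_copy1 u : copy0 u != copy1 u.
Proof. by apply/eqP => /(congr1 (fun x : V => val (tagged x))). Qed.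

Lemma tag_mem_double_seq us x : x \in double_seq us -> tag x \in us.
Proof.
elim: us => //= u us IH; rewrite !inE => /or3P[/eqP-> | /eqP-> | /IH->];
  by rewrite ?eqxx ?orbT.
Qed.

Lemma copies_mem_double_seq us u :
  u \in us -> (copy0 u \in double_seq us) && (copy1 u \in double_seq us).
Proof.
elim: us => //= v us IH; rewrite inE => /predU1P[->|/IH/andP[in0 in1]].
  by rewrite !inE !eqxx orbT.
by rewrite !inE in0 in1 !orbT.
Qed.

Lemma double_seq_uniq us : uniq us -> uniq (double_seq us).
Proof.
elim: us => //= u us IH /andP[u_new us_uniq]; rewrite IH // andbT inE negb_or.
rewrite copy0_neq_copy1 /=; apply/andP; split;
  by apply: contra u_new => /tag_mem_double_seq.
Qed.

Lemma nth_double_seq_tag us x0 i : i < size us ->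
  tag (nth x0 (double_seq us) (2 * i)) = tag (nth x0 (double_seq us) (2 * i).+1).
Proof. by elim: us i => [|u us IH] [|i] // lt_i; rewrite mulnS add2n; apply: IH. Qed.

Lemma dns_from_double_seq p us :
  legal_from e (cnbhd_seq e (map tag p)) us -> dns_from E p (double_seq us).
Proof.
elim: us p => //= u us IH p /andP[/set0Pn[v /setDP[v_u v_new]] legal_us].
have unseen : count (fun y => copy0 v \in cnbhd E y) p = 0.
  apply/eqP; rewrite -leqn0 leqNgt -has_count (eq_has (cnbhd_Gf _)).
  by rewrite inE has_map in v_new.
have v_copy0 : copy0 v \in cnbhd E (copy0 u) by rewrite cnbhd_Gf.
have v_copy1 : copy0 v \in cnbhd E (copy1 u) by rewrite cnbhd_Gf.
apply/and3P; split.
- by apply/existsP; exists (copy0 v); rewrite v_copy0 unseen.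
- by apply/existsP; exists (copy0 v); rewrite v_copy1 -cats1 count_cat unseen /= v_copy0.
- by apply: IH; rewrite !map_rcons !cnbhd_seq_rcons -setUA setUid.
Qed.

Lemma cnbhd_sym x y : (x \in cnbhd e y) = (y \in cnbhd e x).
Proof. by rewrite !inE eq_sym e_sym. Qed.

Lemma double_seq_double_dom us : dominating e [set x | x \in us] ->
  forall w, 2 <= #|cnbhd E w :&: [set x | x \in double_seq us]|.
Proof.
move=> /dominating_seqP dom w; have := dom (tag w); rewrite inE => /hasP[v v_us w_v].
have /andP[in0 in1] := copies_mem_double_seq v_us.
have copies_sub : [set copy0 v; copy1 v] \subset cnbhd E w :&: [set x | x \in double_seq us].
  by apply/subsetP => z /set2P[]->; rewrite in_setI cnbhd_Gf /= cnbhd_sym w_v inE ?in0 ?in1.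
by apply: leq_trans (subset_leq_card copies_sub); rewrite cards2 copy0_neq_copy1.
Qed.

Lemma double_seq_GDDS us : dom_seq e us -> size us = grundy_dom e -> is_GDDS E (double_seq us).
Proof.
move=> /andP[legal_us dom_us] size_us; rewrite legal_seqE in legal_us.
have uniq_double := double_seq_uniq (legal_from_uniq legal_us).
have ddom : double_dom_seq E (double_seq us).
  rewrite /double_dom_seq /double_nbhd_seq uniq_double dns_from_double_seq /=.
    exact/forallP/double_seq_double_dom.
  by rewrite cnbhd_seq0.
split=> //; apply/eqP; rewrite eqn_leq (max_size_ge uniq_double ddom).
by rewrite size_double_seq size_us grundy_double_dom_Gf_le.
Qed.

End BlowUp.

Theorem lemma3 (T : finType) (e : rel T) (f : T -> nat)
  (e_sym : symmetric e) (e_irr : irreflexive e)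
  (T_ne : 0 < #|T|) (f_pos : forall v, 0 < f v) :
  grundy_double_dom (Gf_edge e f) <= 2 * grundy_dom e /\
  exists (s : seq (Gf_vert T f)) (k : nat),
    is_GDDS (Gf_edge e f) s /\ size s = 2 * k /\
    forall i, i < k ->
      forall x0 : Gf_vert T f,
        true_twins (Gf_edge e f) (nth x0 s (2 * i)) (nth x0 s (2 * i).+1).
Proof.
split; first exact: grundy_double_dom_Gf_le.
have [us [dom_us size_us]] := grundy_dom_attained e.
exists (double_seq f_pos us), (size us); split; last split.
- exact: double_seq_GDDS.
- exact: size_double_seq.
- by move=> i lt_i x0; apply/true_twins_tag/nth_double_seq_tag.
Qed.
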